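(* Let $q$ be a prime power. Then: (i) $\ell_q(u,n)=u+q$ for all integers $n\ge1$ and $1\le u\le\min\{n,q\}$; (ii) $\ell_q(sq)=sq+q$ for $1\le s\le q$; (iii) $\ell_q(q+1,n)=2(q+1)$ for all $n\ge2$; (iv) if $q$ is even, $\ell_q(q+2,n)=2(q+1)$ for all $n\ge 2$; (v) $\ell_q(q^2-2q+1)=q^2-1$; (vi) $\ell_q(u)=q^2$ for $q^2-2q+2\le u\le q^2-q$; (vii) $\ell_q(u)=q^2+q$ for $q^2-q+1\le u\le q^2$.
   Context: In the affine plane $\mathrm{AG}(2,q)$, a transversal is a set $\mathcal{T}=\{L_1,\dots,L_{q+1}\}$ of $q+1$ pairwise non-parallel lines (one from each parallel class). For a set $\mathcal{F}$ of points of $\mathrm{AG}(2,q)$ put $\mathcal{F}(\mathcal{T})=\sum_{i=1}^{q+1}|\mathcal{F}\cap L_i|$. A projective $(u,n)$-arc in $\mathrm{AG}(2,q)$ is a set of $u$ points meeting every line in at most $n$ points. For integers $u,n\ge0$ such that a projective $(u,n)$-arc in $\mathrm{AG}(2,q)$ exists, $\ell_q(u,n)$ is the minimum, over all projective $(u,n)$-arcs $\mathcal{F}$ in $\mathrm{AG}(2,q)$, of $\max\{\mathcal{F}(\mathcal{T}):\mathcal{T}\text{ a transversal of }\mathrm{AG}(2,q)\}$. For $0\le u\le q^2$, $\ell_q(u)=\ell_q(u,q)$ (the same minimum over all sets of $u$ points). In parts (i),(iii),(iv) the value $u$ is assumed to be such that a projective $(u,n)$-arc in $\mathrm{AG}(2,q)$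 exists. *)

From HB Require Import structures.
From mathcomp Require Import all_boot all_order all_algebra.
Set Implicit Arguments. Unset Strict Implicit. Unset Printing Implicit Defensive.
Import GRing.Theory.
Local Open Scope ring_scope.

(* The affine plane AG(2,q) over a finite field F with #|F| = q:
   points are pairs (x,y) in F * F. *)
Definition point (F : finFieldType) := (F * F)%type.

Definition is_line (F : finFieldType) (L : {set point F}) : bool :=
  [exists a : F, exists b : F, exists c : F,
     ((a, b) != (0, 0)) && (L == [set p : point F | a * p.1 + b * p.2 == c])].

Definition parallel (F : finFieldType) (L1 L2 : {set point F}) : bool :=
  (L1 == L2) || (L1 :&: L2 == set0).

Definition transversal (F : finFieldType) (T : {set {set point F}}) : bool :=
  [&& [forall L in T, is_line L], #|T| == #|F|.+1 &
      [forall L1 in T, forall L2 in T, (L1 != L2) ==> ~~ parallel L1 L2]].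

Definition FT (F : finFieldType) (S : {set point F}) (T : {set {set point F}}) : nat :=
  (\sum_(L in T) #|S :&: L|)%N.

Definition proj_arc (F : finFieldType) (S : {set point F}) (u n : nat) : Prop :=
  #|S| = u /\ (forall L, is_line L -> #|S :&: L| <= n)%N.

Definition maxT (F : finFieldType) (S : {set point F}) : nat :=
  (\max_(T : {set {set point F}} | transversal T) FT S T)%N.

(* ell_is F u n v  <=>  ell_q(u,n) = v  (q = #|F|): v is attained by some
   (u,n)-arc and is a lower bound of maxT over all (u,n)-arcs. *)
Definition ell_is (F : finFieldType) (u n v : nat) : Prop :=
  (exists S : {set point F}, proj_arc S u n /\ maxT S = v) /\ (forall S : {set point F}, proj_arc S u n -> (v <= maxT S)%N).

From Pilot Require Import Defs.
From mathcomp Require Import all_boot all_algebra all_fingroup all_solvable.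
From mathcomp Require Import finfield zify ring.
Set Implicit Arguments. Unset Strict Implicit. Unset Printing Implicit Defensive.
Import GRing.Theory FinRing.Theory.
Local Open Scope ring_scope.

(* A transversal picks one line in each of the q + 1 parallel classes, so [maxT S]
   is the sum over the directions of the largest intersection of [S] with a line of
   that direction.  Lower bounds: the q + 1 lines through a point of [S] give
   [|S| + q]; every parallel class has a line with at least [|S| / q] points; and a
   set whose complement has at most [2(q - 1)] points contains a whole line, since
   blocking sets of AG(2,q) have at least [2q - 1] points (Jamison).  Upper bounds
   come from explicit sets: points of a line, unions of parallel lines, grids avoiding
   one or both axes, and an ellipse ([q + 1] points, at most 2 on a line), to which the
   origin can be added in even characteristic because all lines through it are
   tangent. *)

Lemma exists_subset_card (T : finType) (A : {set T}) k : (k <= #|A|)%N ->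
  exists2 B : {set T}, B \subset A & #|B| = k.
Proof.
move=> le_k; exists [set x in take k (enum A)].
  by apply/subsetP => x; rewrite inE => /mem_take; rewrite mem_enum.
rewrite cardsE; have /card_uniqP -> := take_uniq k (enum_uniq (mem A)).
by rewrite size_takel // -cardE.
Qed.

Section FinFieldFacts.
Variable F : finFieldType.

Lemma card_roots_quadratic (a b e : F) : a != 0 ->
  (#|[set t : F | (a * t ^+ 2 + b * t + e == 0)%R]| <= 2)%N.
Proof.
move=> an0; set R := [set t | _]; have [-> | [r rR]] := set_0Vmem R; first by rewrite cards0.
apply: (@leq_trans #|[set r; - b / a - r]|); last by rewrite cards2; case: (_ != _).
apply/subset_leq_card/subsetP => t; rewrite !inE => /eqP te.
move: rR; rewrite inE => /eqP re.
have : (t - r) * (a * (t + r) + b) = 0.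
  by rewrite -[RHS](subrr 0) -{1}te -re; ring.
move/eqP; rewrite mulf_eq0 subr_eq0 => /orP[-> // | /eqP tr].
apply/orP; right; rewrite -subr_eq0.
have -> : t - (- b / a - r) = (a * (t + r) + b) / a by field.
by rewrite tr mul0r.
Qed.

Lemma card_sqr_roots_char2 (a e : F) : 2%:R = 0 :> F -> a != 0 ->
  (#|[set t : F | (a * t ^+ 2 == e)%R]| <= 1)%N.
Proof.
move=> two0 an0; apply/card_le1_eqP => t t'; rewrite !inE => /eqP te /eqP t'e.
have : (t - t') ^+ 2 = 0.
  have -> : (t - t') ^+ 2 = (a * t ^+ 2 - a * t' ^+ 2) / a - 2%:R * t' * (t - t') by field.
  by rewrite te t'e subrr mul0r two0 !mul0r subrr.
by move/eqP; rewrite expf_eq0 subr_eq0 => /eqP.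
Qed.

Lemma two_eq0 : ~~ odd #|F| -> 2%:R = 0 :> F.
Proof.
move=> even_q; have [p p_pr pcharFp] := finPcharP F.
have /abelem_pgroup/pgroupP/(_ 2 isT) := fin_ring_pchar_abelem pcharFp.
rewrite cardsT dvdn2 even_q => /(_ isT); rewrite inE => /eqP p2.
by rewrite -p2 in pcharFp; apply: pcharf0.
Qed.

Lemma exists_nonvalue_sqr_sub : exists c0 : F, forall z, z ^+ 2 - z != c0.
Proof.
pose f z : F := z ^+ 2 - z.
have f_im : f @: [set: F] = f @: [set~ 1].
  apply/setP => y; apply/imsetP/imsetP => [[z _ ->] | [z _ ->]]; last by exists z.
  have [-> | z1] := eqVneq z 1; last by exists z; rewrite ?inE.
  by exists 0; rewrite ?inE 1?eq_sym ?oner_eq0 // /f expr1n expr0n subrr subr0.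
have /subsetPn[c0 _ c0f] : ~~ ([set: F] \subset f @: [set: F]).
  apply/negP => /subset_leq_card; rewrite f_im cardsT; apply/negP; rewrite -ltnNge.
  apply: leq_ltn_trans (leq_imset_card _ _) _.
  by rewrite cardsC1 ltn_predL (ltnW (card_finNzRing_gt1 F)).
by exists c0 => z; apply: contraNneq c0f => <-; apply: imset_f.
Qed.

End FinFieldFacts.

Section PowerSums.
Variable F : finFieldType.
Local Notation q := #|F|.

Lemma natr_card : (q%:R : F) = 0.
Proof.
by have := @expg_cardG _ [set: F] (1%R : F); rewrite inE cardsT zmodXgE => /(_ isT).
Qed.

Lemma exists_expr_neq1 i : (0 < i < q.-1)%N -> exists2 g : F, g != 0 & g ^+ i != 1.
Proof.
case/andP=> i_gt0 lt_i; apply/exists_inP; apply: contraTT lt_i.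
rewrite negb_exists_in -leqNgt => /forall_inP all_roots.
have := @max_poly_roots _ ('X^i - 1) (enum (predC1 (0 : F))).
rewrite -size_poly_eq0 size_Xn_sub_1 // enum_uniq -cardE cardC1.
apply=> //; apply/allP => g; rewrite mem_enum => gn0.
by rewrite rootE !hornerE (eqP (negbNE (all_roots g gn0))) subrr.
Qed.

Lemma sum_expr_eq0 i : (i < q.-1)%N -> \sum_(a : F) a ^+ i = 0.
Proof.
case: i => [|i] lt_i; first by rewrite (eq_bigr (fun _ => 1)) // sumr_const natr_card.
have [g gn0 gi] := exists_expr_neq1 (i := i.+1) lt_i.
have gsum : \sum_(a : F) a ^+ i.+1 = g ^+ i.+1 * \sum_(a : F) a ^+ i.+1.
  by rewrite mulr_sumr (reindex_inj (mulfI gn0)); apply: eq_bigr => a _; rewrite exprMn.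
apply/eqP; move: gsum => /eqP; rewrite -subr_eq0 -{1}[\sum_a _]mul1r -mulrBl mulf_eq0.
by rewrite subr_eq0 eq_sym (negbTE gi).
Qed.

(* Bivariate polynomials as lists of terms [(k, (i, j))] standing for [k x^i y^j]. *)
Definition eval_terms (s : seq (F * (nat * nat))) (x y : F) : F :=
  \sum_(t <- s) t.1 * x ^+ t.2.1 * y ^+ t.2.2.

Definition mul_affine_terms (s : seq (F * (nat * nat))) (a b c : F) :=
  [seq (t.1 * a, (t.2.1.+1, t.2.2)) | t <- s] ++
  [seq (t.1 * b, (t.2.1, t.2.2.+1)) | t <- s] ++ [seq (t.1 * c, t.2) | t <- s].

Lemma eval_mul_affine_terms s a b c x y :
  eval_terms (mul_affine_terms s a b c) x y = eval_terms s x y * (x * a + y * b + c).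
Proof.
rewrite /eval_terms !big_cat !big_map /= mulr_suml -!big_split /=.
by apply: eq_bigr => t _; rewrite !exprS; ring.
Qed.

Lemma prod_affine_terms (r : seq (F * F * F)) : exists2 s,
  forall x y, \prod_(v <- r) (x * v.1.1 + y * v.1.2 + v.2) = eval_terms s x y &
  all (fun t => t.2.1 + t.2.2 <= size r)%N s.
Proof.
elim: r => [|[[a b] c] r [s E deg_s]].
  by exists [:: (1, (0%N, 0%N))] => // x y; rewrite big_nil /eval_terms big_seq1 !mulr1.
exists (mul_affine_terms s a b c).
  by move=> x y; rewrite big_cons E eval_mul_affine_terms mulrC.
by rewrite /mul_affine_terms !all_cat !all_map; apply/and3P; split;
  apply: sub_all deg_s => t /=; lia.
Qed.

(* Each monomial has degree less than [q - 1] in [x] or in [y]. *)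
Lemma sum_eval_terms_eq0 s : all (fun t => t.2.1 + t.2.2 < 2 * q.-1)%N s ->
  \sum_x \sum_y eval_terms s x y = 0.
Proof.
move=> /allP deg_s; rewrite /eval_terms.
under eq_bigr do rewrite exchange_big.
rewrite exchange_big /= big_seq big1 // => -[k [i j]] /deg_s /= deg_ij.
under eq_bigr do rewrite -mulr_sumr.
rewrite -mulr_suml; have [lt_i | le_i] := ltnP i q.-1.
  by rewrite -mulr_sumr sum_expr_eq0 // mulr0 mul0r.
by rewrite sum_expr_eq0 ?mulr0 //; move: deg_ij le_i; set n := q.-1; lia.
Qed.

Lemma sum_prod_affine_eq0 (r : seq (F * F * F)) : (size r < 2 * q.-1)%N ->
  \sum_x \sum_y \prod_(v <- r) (x * v.1.1 + y * v.1.2 + v.2) = 0.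
Proof.
move=> small_r; have [s E deg_s] := prod_affine_terms r.
under eq_bigr do under eq_bigr do rewrite E.
by apply: sum_eval_terms_eq0; apply: sub_all deg_s => t /leq_ltn_trans; apply.
Qed.

End PowerSums.

Section AffinePlane.
Variable F : finFieldType.
Local Notation q := #|F|.

Lemma q_gt1 : (1 < q)%N. Proof. exact: card_finNzRing_gt1. Qed.

Lemma q_eq_succ2 : exists k, q = k.+2.
Proof. by exists q.-2; have := q_gt1; case: #|F| => [|[]]. Qed.

(* Directions are [Some m] (slope m) and [None] (vertical); [line d c] is the
   line of direction [d] through [(0, c)], resp. [(c, 0)] when [d = None]. *)
Definition lcoord (d : option F) (p : point F) : F :=
  if d is Some m then p.2 - m * p.1 else p.1.

Definition line (d : option F) (c : F) : {set point F} := [set p | lcoord d p == c].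

Definition line_pt (d : option F) (c t : F) : point F :=
  if d is Some m then (t, m * t + c) else (c, t).

Lemma in_line d c p : (p \in line d c) = (lcoord d p == c).
Proof. by rewrite inE. Qed.

Lemma lcoord0 d : lcoord d (0, 0) = 0.
Proof. by case: d => [m|] //=; rewrite mulr0 subr0. Qed.

Lemma line_pt_inj d c : injective (line_pt d c).
Proof. by case: d => [m|] t t' /= [] //= ->. Qed.

Lemma line_ptE d c : line d c = line_pt d c @: [set: F].
Proof.
apply/setP => p; rewrite inE; apply/eqP/imsetP => [<-|[t _ ->]].
- by case: d => [m|]; [exists p.1 | exists p.2]; rewrite //=;
    case: p => x y //=; congr pair; ring.
- by case: d => [m|] /=; ring.
Qed.

Lemma line_pt_in_line d c t : line_pt d c t \in line d c.
Proof. by rewrite line_ptE imset_f. Qed.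

Lemma card_line d c : #|line d c| = q.
Proof. by rewrite line_ptE card_imset ?cardsT //; apply: line_pt_inj. Qed.

Lemma lcoord_inj2 d e p p' : d != e ->
  lcoord d p = lcoord d p' -> lcoord e p = lcoord e p' -> p = p'.
Proof.
case: p p' => x y [x' y'].
have ey (m : F) : y - m * x = y' - m * x -> (x, y) = (x, y').
  by move/addIr ->.
case: d => [m|]; case: e => [m'|] //= dne E1 E2; last by subst x'; exact: ey E2.
- have dm : m' - m != 0 by rewrite subr_eq0 eq_sym; apply: contraNneq dne => ->.
  have : (m' - m) * (x - x') = 0.
    transitivity ((y - m * x - (y - m' * x)) - ((y' - m * x') - (y' - m' * x'))); first by ring.
    by rewrite E1 E2 subrr.
  move/eqP; rewrite mulf_eq0 (negbTE dm) subr_eq0 => /eqP ex.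
  by subst x'; exact: ey E1.
- by subst x'; exact: ey E1.
Qed.

Lemma lines_meet d e c c' : d != e -> exists p, lcoord d p = c /\ lcoord e p = c'.
Proof.
case: d => [m|]; case: e => [m'|] //= dne.
- have dm : m - m' != 0 by rewrite subr_eq0; apply: contraNneq dne => ->.
  exists ((c' - c) / (m - m'), m * ((c' - c) / (m - m')) + c) => /=.
  by split; [ring | field].
- by exists (c', m * c' + c) => /=; split; ring.
- by exists (c, m' * c + c') => /=; split; ring.
Qed.

Lemma is_lineP L : reflect (exists d c, L = line d c) (is_line L).
Proof.
apply: (iffP existsP) => [[a /existsP[b /existsP[c /andP[nz /eqP->]]]]|[[m|] [c ->]]].
- have [b0 | bn0] := eqVneq b 0.
  + subst b; have an0 : a != 0 by move: nz; rewrite xpair_eqE eqxx andbT.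
    exists None, (c / a); apply/setP => p; rewrite !inE /= mul0r addr0.
    by apply/eqP/eqP => [<- | ->]; field.
  + exists (Some (- a / b)), (c / b); apply/setP => p; rewrite !inE /=.
    apply/eqP/eqP => [<- | h]; first by field.
    by rewrite -(divfK bn0 c) -h; field.
- exists (- m); apply/existsP; exists 1; apply/existsP; exists c.
  rewrite xpair_eqE oner_eq0 andbF /=; apply/eqP/setP => p; rewrite !inE /=.
  by rewrite mul1r mulNr addrC.
- exists 1; apply/existsP; exists 0; apply/existsP; exists c.
  rewrite xpair_eqE oner_eq0 /=; apply/eqP/setP => p; rewrite !inE /=.
  by rewrite mul1r mul0r addr0.
Qed.

Lemma affine_set_line (a b c : F) : (a, b) != (0, 0) ->
  exists d e, [set p : point F | a * p.1 + b * p.2 == c] = line d e.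
Proof.
by move=> ab; apply/is_lineP/existsP; exists a; apply/existsP; exists b; apply/existsP; exists c;
  rewrite ab eqxx.
Qed.

Lemma line_neq d e c c' : d != e -> line d c != line e c'.
Proof.
move=> dne; apply: contraTneq (q_gt1) => E; rewrite -leqNgt -(card_line d c).
apply/card_le1_eqP => p p' pL p'L; apply: (lcoord_inj2 dne).
- by move: pL p'L; rewrite !in_line => /eqP -> /eqP ->.
- by move: pL p'L; rewrite E !in_line => /eqP -> /eqP ->.
Qed.

Definition class_max (S : {set point F}) (d : option F) : nat :=
  \max_(c : F) #|S :&: line d c|.

Definition class_argmax (S : {set point F}) (d : option F) : F :=
  [arg max_(c > (0 : F)%R) #|S :&: line d c|]%N.

Lemma leq_class_max S d c : (#|S :&: line d c| <= class_max S d)%N.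
Proof. exact: (@leq_bigmax_cond _ predT (fun c => #|S :&: line d c|)). Qed.

Lemma class_max_leP S d k :
  reflect (forall c, #|S :&: line d c| <= k)%N (class_max S d <= k)%N.
Proof.
by rewrite /class_max; apply: (iffP (bigmax_leqP _ _ _)) => H c //; apply: H.
Qed.

Lemma class_maxE S d : class_max S d = #|S :&: line d (class_argmax S d)|.
Proof. exact: (bigmax_eq_arg (0 : F) (P := predT)). Qed.

Lemma card_setI_line_le_q (S : {set point F}) d c : (#|S :&: line d c| <= q)%N.
Proof. by rewrite -(card_line d c) subset_leq_card ?subsetIr. Qed.

Definition line_dir (L : {set point F}) : option F :=
  odflt None [pick d | [exists c, L == line d c]].

Lemma line_dirP L : is_line L -> exists c, L = line (line_dir L) c.
Proof.
case/is_lineP => d [c E]; rewrite /line_dir.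
case: pickP => [e /existsP[c' /eqP E'] | ]; first by exists c'.
by move=> /(_ d); rewrite /= E; case/existsP; exists c.
Qed.

Lemma FT_le_sum_class_max (S : {set point F}) T :
  Defs.transversal T -> (FT S T <= \sum_d class_max S d)%N.
Proof.
case/and3P => /forallP Tline _ /forallP Tnpar.
have Tdir L : L \in T -> exists c, L = line (line_dir L) c.
  by move=> LT; apply: line_dirP; have := Tline L; rewrite LT.
have dir_inj : {in T &, injective line_dir}.
  move=> L1 L2 L1T L2T eqd; apply/eqP; apply: contraT => neL.
  have [c1 E1] := Tdir _ L1T; have [c2 E2] := Tdir _ L2T.
  have := Tnpar L1; rewrite L1T => /forallP /(_ L2).
  rewrite L2T neL /= /parallel negb_or => /andP[_ /set0Pn[p]].
  rewrite inE E1 E2 !in_line eqd => /andP[/eqP c1E /eqP c2E].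
  by move: neL; rewrite E1 E2 eqd -c1E -c2E eqxx.
apply: (@leq_trans (\sum_(L in T) class_max S (line_dir L))).
  by apply: leq_sum => L LT; have [c {1}->] := Tdir _ LT; apply: leq_class_max.
rewrite -(big_imset _ dir_inj) /= [leqRHS](bigID (mem (line_dir @: T))) /=.
exact: leq_addr.
Qed.

Lemma line_choice_inj (ch : option F -> F) : injective (fun d => line d (ch d)).
Proof.
by move=> d e E; case: (eqVneq d e) => // /(line_neq (ch d) (ch e)); rewrite E eqxx.
Qed.

Lemma transversal_choice (ch : option F -> F) :
  Defs.transversal [set line d (ch d) | d : option F].
Proof.
apply/and3P; split.
- by apply/forallP => L; apply/implyP => /imsetP[d _ ->]; apply/is_lineP; exists d, (ch d).
- by rewrite card_imset ?card_option //; apply: line_choice_inj.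
- apply/forallP => L1; apply/implyP => /imsetP[d _ ->].
  apply/forallP => L2; apply/implyP => /imsetP[e _ ->].
  apply/implyP => ne; rewrite /parallel negb_or ne /=.
  have de : d != e by apply: contraNneq ne => ->.
  have [p [pd pe]] := lines_meet (ch d) (ch e) de.
  by apply/set0Pn; exists p; rewrite !inE pd pe !eqxx.
Qed.

Lemma maxT_sum_class_max S : maxT S = (\sum_d class_max S d)%N.
Proof.
apply/eqP; rewrite eqn_leq; apply/andP; split.
  by apply/bigmax_leqP => T; apply: FT_le_sum_class_max.
apply: leq_trans (leq_bigmax_cond _ (transversal_choice (class_argmax S))).
rewrite /FT big_imset /=; last by move=> d e _ _; apply: line_choice_inj.
by apply: eq_leq; apply: eq_big => [d | d _]; rewrite ?inE ?class_maxE.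
Qed.

Lemma card_setI_line (S : {set point F}) d c :
  #|S :&: line d c| = (\sum_(p in S) (lcoord d p == c))%N.
Proof.
rewrite -sum1_card (eq_bigl (fun p => (p \in S) && (lcoord d p == c))).
  by rewrite big_mkcondr; apply: eq_bigr => p _; case: (_ == _).
by move=> p; rewrite !inE.
Qed.

Lemma sum_card_parallel (S : {set point F}) d : (\sum_c #|S :&: line d c|)%N = #|S|.
Proof.
under eq_bigr do rewrite card_setI_line.
rewrite exchange_big /= -sum1_card; apply: eq_bigr => p _.
by rewrite (bigD1 (lcoord d p)) //= eqxx big1 // => c /negbTE; rewrite eq_sym => ->.
Qed.

Lemma card_le_class_max (S : {set point F}) d : (#|S| <= q * class_max S d)%N.
Proof.
rewrite -(sum_card_parallel S d) -[X in (_ <= X * _)%N]sum1_card big_distrl /=.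
by apply: leq_sum => c _; rewrite mul1n leq_class_max.
Qed.

Lemma class_max_gt (S : {set point F}) d k : (q * k < #|S|)%N -> (k < class_max S d)%N.
Proof.
move=> lt_S; rewrite ltnNge; apply: contraTN lt_S => le_d.
by rewrite -leqNgt (leq_trans (card_le_class_max S d)) ?leq_mul2l ?le_d ?orbT.
Qed.

Lemma exists_line_through2 (x y : point F) : exists d, lcoord d x = lcoord d y.
Proof.
have [e1 | ne] := eqVneq x.1 y.1; first by exists None.
have ne0 : x.1 - y.1 != 0 by rewrite subr_eq0.
exists (Some ((x.2 - y.2) / (x.1 - y.1))) => /=.
by apply/eqP; rewrite -subr_eq0; apply/eqP; field.
Qed.

Lemma sum_lcoord_eq (x y : point F) : x != y -> (\sum_d (lcoord d x == lcoord d y))%N = 1%N.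
Proof.
move=> xy; have [d0 E] := exists_line_through2 x y.
rewrite (bigD1 d0) //= E eqxx big1 // => d dd0.
by case: eqP => // Ed; case/eqP: xy; apply: lcoord_inj2 dd0 Ed E.
Qed.

(* The lines through [y] cover [S :\ y] once and [y] itself [q + 1] times. *)
Lemma sum_card_pencil (S : {set point F}) y : y \in S ->
  (\sum_d #|S :&: line d (lcoord d y)|)%N = (#|S| + q)%N.
Proof.
move=> yS; under eq_bigr do rewrite card_setI_line.
rewrite exchange_big /= (bigD1 y) //=; under eq_bigr do rewrite eqxx.
rewrite sum1_card card_option (eq_bigr (fun _ => 1%N)); last first.
  by move=> x /andP[_]; apply: sum_lcoord_eq.
rewrite sum1_card [in RHS](cardD1 y) yS.
have -> : #|[predD1 S & y]| = #|[pred x in S | x != y]| by apply: eq_card => x; rewrite !inE andbC.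
by rewrite addSn addnC.
Qed.

Lemma maxT_ge_card_add_q (S : {set point F}) : S != set0 -> (#|S| + q <= maxT S)%N.
Proof.
case/set0Pn => y yS; rewrite maxT_sum_class_max -(sum_card_pencil yS).
by apply: leq_sum => d _; apply: leq_class_max.
Qed.

Lemma card_dirC1 (d0 : option F) : #|predC1 d0| = q.
Proof. by rewrite cardC1 card_option. Qed.

Lemma maxT_ge_class (S : {set point F}) d0 a b : (a <= class_max S d0)%N ->
  (forall d, b <= class_max S d)%N -> (a + q * b <= maxT S)%N.
Proof.
move=> le_a le_b; rewrite maxT_sum_class_max (bigD1 d0) //= leq_add //.
rewrite -(card_dirC1 d0) -sum_nat_const; apply: leq_sum => d _; exact: le_b.
Qed.

Lemma maxT_le_class (S : {set point F}) d0 a b :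
  (forall c, #|S :&: line d0 c| <= a)%N ->
  (forall d c, d != d0 -> #|S :&: line d c| <= b)%N -> (maxT S <= a + q * b)%N.
Proof.
move=> le_a le_b; rewrite maxT_sum_class_max (bigD1 d0) //=.
rewrite leq_add //; first exact/class_max_leP.
rewrite -(card_dirC1 d0) -sum_nat_const; apply: leq_sum => d dd0.
by apply/class_max_leP => c; apply: le_b.
Qed.

Lemma maxT_ge_pigeon (S : {set point F}) k : (q * k < #|S|)%N -> (q.+1 * k.+1 <= maxT S)%N.
Proof.
move=> lt_S; rewrite mulSn; apply: (maxT_ge_class (d0 := None)) => [|d];
  exact: class_max_gt.
Qed.

Lemma maxT_le_uniform (S : {set point F}) b :
  (forall d c, #|S :&: line d c| <= b)%N -> (maxT S <= q.+1 * b)%N.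
Proof. by move=> le_b; rewrite mulSn; apply: (maxT_le_class (d0 := None)) => // d c _. Qed.

Lemma maxT_ge_full_line (S : {set point F}) d c k : line d c \subset S ->
  (q * k < #|S|)%N -> (q + q * k.+1 <= maxT S)%N.
Proof.
move=> lS lt_S; apply: (maxT_ge_class (d0 := d)); last by move=> e; apply: class_max_gt lt_S.
by rewrite -(card_line d c) -(setIidPr lS) leq_class_max.
Qed.

Lemma proj_arcP (S : {set point F}) u n :
  proj_arc S u n <-> #|S| = u /\ (forall d c, #|S :&: line d c| <= n)%N.
Proof.
split=> [[cS le_n] | [cS le_n]]; split=> //.
- by move=> d c; apply: le_n; apply/is_lineP; exists d, c.
- by move=> L /is_lineP[d [c ->]].
Qed.

Lemma proj_arc_q (S : {set point F}) : proj_arc S #|S| q.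
Proof.
by apply/proj_arcP; split=> // d c; apply: card_setI_line_le_q.
Qed.

Lemma ell_isI u n v (S : {set point F}) : proj_arc S u n -> (maxT S <= v)%N ->
  (forall S' : {set point F}, #|S'| = u -> (v <= maxT S')%N) -> ell_is F u n v.
Proof.
move=> arcS le_v ge_v; split=> [|S' [cS' _]]; last exact: ge_v.
by exists S; split=> //; apply/eqP; rewrite eqn_leq le_v ge_v //; case: arcS.
Qed.

(* Jamison; Brouwer-Schrijver.  For [O] in [C], the product of
   [x (p - O).1 + y (p - O).2 - 1] over [p] in [C :\ O] vanishes at every
   [(x, y) != 0], since the line [x (z - O).1 + y (z - O).2 = 1] meets [C].  If
   [#|C| <= 2(q - 1)] its sum over the plane vanishes for degree reasons, but that
   sum is its value [(-1)^(#|C| - 1)] at the origin. *)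
Lemma blocking_set_card (C : {set point F}) :
  (forall d c, line d c :&: C != set0) -> (2 * q.-1 < #|C|)%N.
Proof.
move=> block; rewrite ltnNge; apply/negP => small.
have [O OC] : exists O, O \in C by have /set0Pn[O /setIP[_ OC]] := block None 0; exists O.
pose r := [seq (p.1 - O.1, p.2 - O.2, -1 : F) | p <- enum (C :\ O)].
have small_r : (size r < 2 * q.-1)%N.
  by rewrite size_map -cardE; move: small; rewrite (cardsD1 O C) OC add1n.
pose f x y := \prod_(v <- r) (x * v.1.1 + y * v.1.2 + v.2).
have f_eq0 x y : (x, y) != (0, 0) -> f x y = 0.
  move=> xy; have [d [e E]] := affine_set_line (1 + x * O.1 + y * O.2) xy.
  have /set0Pn[p /setIP[pL pC]] := block d e; rewrite -E inE in pL.
  have pv : x * (p.1 - O.1) + y * (p.2 - O.2) - 1 = 0.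
    by rewrite -subr_eq0 in pL; rewrite -(eqP pL); ring.
  apply/eqP; rewrite prodf_seq_eq0; apply/hasP; exists (p.1 - O.1, p.2 - O.2, -1 : F).
    apply/mapP; exists p => //; rewrite mem_enum !inE pC andbT.
    apply/eqP => pO; move: pv; rewrite pO !subrr !mulr0 addr0 add0r => /eqP.
    by rewrite oppr_eq0 oner_eq0.
  by rewrite /= pv.
have := sum_prod_affine_eq0 small_r; rewrite pair_bigA /= (bigD1 (0, 0)) //=.
rewrite [X in _ + X]big1 => [|[x y] /= xy]; last exact: f_eq0.
rewrite addr0 => /eqP; rewrite prodf_seq_eq0 => /hasP[_ /mapP[p _ ->]] /=.
by rewrite !mul0r !add0r oppr_eq0 oner_eq0.
Qed.

Lemma card_setX_line (A : {set F}) d c : d != Some 0 ->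
  (#|setX [set: F] A :&: line d c| <= #|A|)%N.
Proof.
move=> dn0; have snd_inj : {in setX [set: F] A :&: line d c &, injective (@snd F F)}.
  move=> p p'; rewrite !inE => /andP[_ /eqP pd] /andP[_ /eqP p'd] e.
  by apply: (lcoord_inj2 dn0); [rewrite pd p'd | rewrite /= e !mul0r].
rewrite -(card_in_imset snd_inj) subset_leq_card //; apply/subsetP => y /imsetP[p].
by rewrite !inE => /andP[/andP[_ pA] _] ->.
Qed.

Lemma card_setI_line_miss (S : {set point F}) d c p :
  p \in line d c -> p \notin S -> (#|S :&: line d c| <= q.-1)%N.
Proof.
move=> pL pS; rewrite -(card_line d c) (cardsD1 p (line d c)) pL add1n /=.
apply/subset_leq_card/subsetP => x; rewrite !inE => /andP[xS ->]; rewrite andbT.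
by apply: contraNneq pS => <-.
Qed.

Lemma ell_small_arc n u : (1 <= u <= minn n q)%N -> ell_is F u n (u + q).
Proof.
rewrite leq_min => /and3P[u_gt0 le_un le_uq].
have [A _ cA] : exists2 A : {set F}, A \subset [set: F] & #|A| = u.
  by apply: exists_subset_card; rewrite cardsT.
pose S : {set point F} := [set (x, 0) | x in A].
have cS : #|S| = u by rewrite card_imset // => x y [].
have S_sub : S \subset setX [set: F] [set 0].
  by apply/subsetP => _ /imsetP[x _ ->]; rewrite !inE /=.
apply: (ell_isI (S := S)).
- apply/proj_arcP; split=> // d c.
  by rewrite (leq_trans _ le_un) // -cS subset_leq_card ?subsetIl.
- rewrite -[q]muln1; apply: (maxT_le_class (d0 := Some 0)) => [c | d c dn0].
    by rewrite -cS subset_leq_card ?subsetIl.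
  rewrite -(cards1 (0 : F)) (leq_trans _ (card_setX_line _ c dn0)) //.
  by rewrite subset_leq_card ?setSI.
- by move=> S' cS'; rewrite -cS' maxT_ge_card_add_q // -card_gt0 cS'.
Qed.

Lemma ell_multiple_q s : (1 <= s <= q)%N -> ell_is F (s * q) q (s * q + q).
Proof.
case/andP=> s_gt0 le_sq.
have [A _ cA] : exists2 A : {set F}, A \subset [set: F] & #|A| = s.
  by apply: exists_subset_card; rewrite cardsT.
pose S : {set point F} := setX [set: F] A.
have cS : #|S| = (s * q)%N by rewrite cardsX cardsT cA mulnC.
apply: (ell_isI (S := S)); first by rewrite -cS; apply: proj_arc_q.
- rewrite addnC mulnC; apply: (maxT_le_class (d0 := Some 0)) => [c | d c dn0].
    exact: card_setI_line_le_q.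
  by rewrite -cA card_setX_line.
- move=> S' cS'; rewrite -cS' maxT_ge_card_add_q // -card_gt0 cS'.
  by rewrite muln_gt0 s_gt0 (ltnW q_gt1).
Qed.

(* Every line contains a point on one of the axes: [line_pt d c 0]. *)
Lemma ell_grid : ell_is F (q.-1 * q.-1) q (q.+1 * q.-1).
Proof.
have [k qE] := q_eq_succ2.
pose S : {set point F} := setX [set~ 0] [set~ 0].
have cS : #|S| = (q.-1 * q.-1)%N by rewrite cardsX cardsC1.
apply: (ell_isI (S := S)); first by rewrite -cS; apply: proj_arc_q.
- apply: maxT_le_uniform => d c; apply: (card_setI_line_miss (line_pt_in_line d c 0)).
  by case: d => [m|]; rewrite !inE /= ?mulr0 ?add0r eqxx ?andbF.
- move=> S' cS'; apply: leq_trans (maxT_ge_pigeon (k := q.-2) _); first by rewrite qE.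
  by rewrite cS' qE /=; nia.
Qed.

Lemma exists_line_subset (S : {set point F}) : (#|~: S| <= 2 * q.-1)%N ->
  exists d c, line d c \subset S.
Proof.
move=> small; case: (boolP [exists d, exists c, line d c \subset S]).
  by case/existsP=> d /existsP[c lS]; exists d, c.
move/existsPn=> no_line; move: small; rewrite leqNgt blocking_set_card // => d c.
have /existsPn /(_ c) /subsetPn[p pL pS] := no_line d.
by apply/set0Pn; exists p; rewrite in_setI in_setC pL.
Qed.

Lemma ell_blocking_range u : (q.-1 * q.-1 < u <= q * q.-1)%N -> ell_is F u q (q * q).
Proof.
have [k qE] := q_eq_succ2.
case/andP=> lt_u le_u.
have [S S_sub cS] : exists2 S : {set point F}, S \subset setX [set~ 0] [set: F] & #|S| = u.
  by apply: exists_subset_card; rewrite cardsX cardsC1 cardsT mulnC.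
have qqE : (q * q = q + q * q.-1)%N by rewrite qE; nia.
apply: (ell_isI (S := S)); first by rewrite -cS; apply: proj_arc_q.
- rewrite qqE; apply: (maxT_le_class (d0 := None)) => [c | [m|] c // _].
    exact: card_setI_line_le_q.
  apply: (card_setI_line_miss (line_pt_in_line _ c 0)).
  by apply: contraTN isT => /(subsetP S_sub); rewrite !inE /= eqxx.
- move=> S' cS'; have [d [c lS']] : exists d c, line d c \subset S'.
    apply: exists_line_subset; have := cardsC S'; rewrite card_prod cS'.
    by move: lt_u; rewrite qE /=; nia.
  apply: leq_trans (maxT_ge_full_line (k := q.-2) lS' _); first by rewrite qqE qE.
  by rewrite cS'; move: lt_u; rewrite qE /=; nia.
Qed.

Lemma ell_large u : (q * q.-1 < u <= q * q)%N -> ell_is F u q (q.+1 * q).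
Proof.
case/andP=> lt_u le_u.
have [S _ cS] : exists2 S : {set point F}, S \subset [set: point F] & #|S| = u.
  by apply: exists_subset_card; rewrite cardsT card_prod.
apply: (ell_isI (S := S)); first by rewrite -cS; apply: proj_arc_q.
- exact/maxT_le_uniform/card_setI_line_le_q.
- move=> S' cS'; apply: leq_trans (maxT_ge_pigeon (k := q.-1) _); last by rewrite cS'.
  by rewrite prednK // ltnW // q_gt1.
Qed.

Definition ldir (d : option F) : point F := if d is Some m then (1, m) else (0, 1).

Section Ellipse.
Variable c0 : F.
Hypothesis c0_nonvalue : forall z : F, z ^+ 2 - z != c0.

(* Anisotropic because [z^2 - z - c0] has no root. *)
Definition qform (p : point F) : F := p.1 ^+ 2 - p.1 * p.2 - c0 * p.2 ^+ 2.

Definition ellipse : {set point F} := [set p | qform p == 1].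

Lemma qform_eq0 v : qform v = 0 -> v = (0, 0).
Proof.
case: v => x y; rewrite /qform /=; have [-> | yn0] := eqVneq y 0.
  by rewrite mulr0 expr0n /= mulr0 !subr0 => /eqP; rewrite expf_eq0 => /eqP ->.
move=> qv; case/negP: (c0_nonvalue (x / y)); rewrite -subr_eq0.
have -> : (x / y) ^+ 2 - x / y - c0 = (x ^+ 2 - x * y - c0 * y ^+ 2) / y ^+ 2 by field.
by rewrite qv mul0r.
Qed.

Lemma qform_ldir_neq0 d : qform (ldir d) != 0.
Proof. by apply/eqP => /qform_eq0; case: d => [m|] [] /eqP; rewrite ?oner_eq0. Qed.

Lemma qform_line_pt d c : exists b e,
  forall t, qform (line_pt d c t) = qform (ldir d) * t ^+ 2 + b * t + e.
Proof.
case: d => [m|]; last by exists (- c), (c ^+ 2) => t; rewrite /qform /=; ring.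
by exists (- c - 2%:R * c0 * m * c), (- c0 * c ^+ 2) => t; rewrite /qform /=; ring.
Qed.

Lemma qform_line_pt0 d t : qform (line_pt d 0 t) = qform (ldir d) * t ^+ 2.
Proof. by case: d => [m|]; rewrite /qform /=; ring. Qed.

Lemma card_ellipse_line_pt d c :
  #|ellipse :&: line d c| = #|[set t | qform (line_pt d c t) == 1]|.
Proof.
rewrite line_ptE -(card_imset _ (@line_pt_inj d c)); apply: eq_card => p.
apply/setIP/imsetP => [[pE /imsetP[t _ pt]] | [t tE ->]].
  by exists t => //; rewrite inE -pt; rewrite inE in pE.
split; last exact: imset_f.
by move: tE; rewrite !inE.
Qed.

Lemma card_ellipse_line d c : (#|ellipse :&: line d c| <= 2)%N.
Proof.
rewrite card_ellipse_line_pt; have [b [e qE]] := qform_line_pt d c.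
apply: leq_trans (card_roots_quadratic b (e - 1) (qform_ldir_neq0 d)).
by apply/subset_leq_card/subsetP => t; rewrite !inE qE addrA subr_eq0.
Qed.

Lemma card_ellipse_line0 d : 2%:R = 0 :> F -> (#|ellipse :&: line d 0%R| <= 1)%N.
Proof.
move=> two0; rewrite card_ellipse_line_pt.
apply: leq_trans (card_sqr_roots_char2 1 two0 (qform_ldir_neq0 d)).
by apply/subset_leq_card/subsetP => t; rewrite !inE qform_line_pt0.
Qed.

Definition ellipse_coef (d : option F) : F :=
  - (2%:R * (ldir d).1 - (ldir d).2) / qform (ldir d).

(* The second intersection of [ellipse] with the line through [(1, 0)] of direction [d]. *)
Definition ellipse_pt (d : option F) : point F :=
  (1 + ellipse_coef d * (ldir d).1, ellipse_coef d * (ldir d).2).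

Lemma ellipse_pt_in d : ellipse_pt d \in ellipse.
Proof.
rewrite inE /ellipse_pt /ellipse_coef; have := qform_ldir_neq0 d.
by case: (ldir d) => a b; rewrite /qform /= => qn0; apply/eqP; field.
Qed.

Lemma ellipse_coef_eq0 d : ellipse_coef d = 0 -> 2%:R * (ldir d).1 = (ldir d).2.
Proof.
move/eqP; rewrite mulf_eq0 invr_eq0 (negbTE (qform_ldir_neq0 d)) orbF oppr_eq0 subr_eq0.
exact: eqP.
Qed.

Lemma ellipse_pt_inj : injective ellipse_pt.
Proof.
move=> d e [/addrI coefE coef2E].
case: d e coefE coef2E => [t|] [s|] /=; rewrite ?mulr1 ?mulr0 => coefE coef2E.
- have [l0 | ln0] := eqVneq (ellipse_coef (Some t)) 0.
    have := ellipse_coef_eq0 l0; rewrite coefE in l0; have := ellipse_coef_eq0 l0.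
    by rewrite /= !mulr1 => <- <-.
  by rewrite coefE in ln0 coef2E; rewrite (mulfI ln0 coef2E).
- rewrite coefE mul0r in coef2E.
  by have := ellipse_coef_eq0 (esym coef2E); rewrite /= mulr0 => /eqP; rewrite eq_sym oner_eq0.
- rewrite -coefE mul0r in coef2E.
  by have := ellipse_coef_eq0 coef2E; rewrite /= mulr0 => /eqP; rewrite eq_sym oner_eq0.
- by [].
Qed.

Lemma card_ellipse : (q.+1 <= #|ellipse|)%N.
Proof.
rewrite -card_option -cardsT -(card_imset _ ellipse_pt_inj).
by apply/subset_leq_card/subsetP => _ /imsetP[d _ ->]; apply: ellipse_pt_in.
Qed.

End Ellipse.

Lemma ell_oval n : (2 <= n)%N -> ell_is F q.+1 n (2 * q.+1).
Proof.
move=> le2n; have [c0 c0P] := exists_nonvalue_sqr_sub F.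
have [S Sell cS] := exists_subset_card (card_ellipse c0P).
have S_line d c : (#|S :&: line d c| <= 2)%N.
  exact: leq_trans (subset_leq_card (setSI _ Sell)) (card_ellipse_line c0P d c).
apply: (ell_isI (S := S)).
- by apply/proj_arcP; split=> // d c; apply: leq_trans le2n.
- by rewrite mulnC; apply: maxT_le_uniform.
- by move=> S' cS'; rewrite mulnC maxT_ge_pigeon // cS' muln1.
Qed.

(* In characteristic 2 every line through the origin is tangent to the ellipse, so
   adding the origin keeps the bound 2. *)
Lemma ell_hyperoval n : ~~ odd q -> (2 <= n)%N -> ell_is F q.+2 n (2 * q.+1).
Proof.
move=> even_q le2n; have two0 := two_eq0 even_q.
have [c0 c0P] := exists_nonvalue_sqr_sub F.
have [S Sell cS] := exists_subset_card (card_ellipse c0P).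
pose O : point F := (0, 0).
have O_ell : O \notin ellipse c0.
  by rewrite inE /qform /= !expr2 !mulr0 !subrr eq_sym oner_eq0.
have cH : #|O |: S| = q.+2.
  by rewrite cardsU1 cS (contra (subsetP Sell _) O_ell).
have H_line d c : (#|(O |: S) :&: line d c| <= 2)%N.
  rewrite setIUl (leq_trans (leq_card_setU _ _)) //.
  have S_sub c' : (#|S :&: line d c'| <= #|ellipse c0 :&: line d c'|)%N.
    exact/subset_leq_card/setSI.
  have [-> | cn0] := eqVneq c 0.
    apply: (@leq_add _ _ 1 1); first by rewrite -(cards1 O) subset_leq_card ?subsetIl.
    exact: leq_trans (S_sub 0) (card_ellipse_line0 c0P d two0).
  have -> : [set O] :&: line d c = set0.
    apply/setP => p; rewrite !inE; apply/andP => -[/eqP -> ].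
    by rewrite lcoord0 eq_sym (negbTE cn0).
  by rewrite cards0 add0n (leq_trans (S_sub c)) ?card_ellipse_line.
apply: (ell_isI (S := O |: S)).
- by apply/proj_arcP; split=> // d c; apply: leq_trans le2n.
- by rewrite mulnC; apply: maxT_le_uniform.
- by move=> S' cS'; rewrite mulnC maxT_ge_pigeon // cS' muln1.
Qed.

End AffinePlane.

Local Close Scope ring_scope.

Theorem theorem4p4 (F : finFieldType) :
  let q := #|F| in
  (* (i) *)
  (forall n u : nat, 1 <= n -> 1 <= u <= minn n q ->
     (exists S : {set point F}, proj_arc S u n) -> ell_is F u n (u + q)) /\
  (* (ii) *)
  (forall s : nat, 1 <= s <= q -> ell_is F (s * q) q (s * q + q)) /\
  (* (iii) *)
  (forall n : nat, 2 <= n ->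
     (exists S : {set point F}, proj_arc S q.+1 n) -> ell_is F q.+1 n (2 * q.+1)) /\
  (* (iv) *)
  (~~ odd q -> forall n : nat, 2 <= n ->
     (exists S : {set point F}, proj_arc S q.+2 n) -> ell_is F q.+2 n (2 * q.+1)) /\
  (* (v) *)
  ell_is F (q ^ 2 - 2 * q + 1) q (q ^ 2 - 1) /\
  (* (vi) *)
  (forall u : nat, q ^ 2 - 2 * q + 2 <= u <= q ^ 2 - q -> ell_is F u q (q ^ 2)) /\
  (* (vii) *)
  (forall u : nat, q ^ 2 - q + 1 <= u <= q ^ 2 -> ell_is F u q (q ^ 2 + q)).
Proof.
move=> q; have q_gt1 : (1 < q)%N := q_gt1 F.
have sqrE : (q ^ 2 = q * q)%N by rewrite mulnn.
split; first by move=> n u _ u_range _; apply: ell_small_arc.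
split; first exact: ell_multiple_q.
split; first by move=> n le2n _; apply: ell_oval.
split; first by move=> even_q n le2n _; apply: ell_hyperoval.
split.
  have -> : (q ^ 2 - 2 * q + 1 = q.-1 * q.-1)%N by rewrite sqrE; nia.
  have -> : (q ^ 2 - 1 = q.+1 * q.-1)%N by rewrite sqrE; nia.
  exact: ell_grid.
split=> u u_range; rewrite sqrE.
  by apply: ell_blocking_range; move: u_range; rewrite sqrE; nia.
have -> : (q * q + q = q.+1 * q)%N by rewrite mulSn addnC.
by apply: ell_large; move: u_range; rewrite sqrE; nia.
Qed.
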